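(* Assume hypotheses (A1)–(A4) below and fix $\sigma\in(0,\infty]$. Then the functionals $\mathcal E_{\sigma,h}$ (restricted to $\mathcal T_\sigma$) $\Gamma$-converge as $h\to0$ in the weak topology of $\mathcal T_\sigma$ to $\overline{\mathcal E}_\sigma$ (i.e. the liminf inequality holds for all weakly convergent sequences, and recovery sequences converge weakly).
   Context: Let $\{\mathcal T_\sigma\}_{\sigma\in\mathbb R\cup\{\pm\infty\}}$ be reflexive Banach spaces with norms $\|\cdot\|_{\mathcal T_\sigma}$, $\mathcal T_{-\sigma}:=\mathcal T_\sigma^*$, and $\mathcal T_\sigma\subset\mathcal T_0$ for $\sigma\in(0,\infty]$. Limits ''as $\sigma\to\infty$'' refer to arbitrary sequences $\sigma_n\to\infty$. (A1) (i) There is $M_1>0$ independent of $\sigma$ with $M_1\|u\|_{\mathcal T_0}\le\|u\|_{\mathcal T_\sigma}$ for all $\sigma\in(0,\infty]$, $u\in\mathcal T_\sigma$. (ii) If $v_\sigma\in\mathcal T_\sigma$ with $\|v_\sigma\|_{\mathcal T_\sigma}\le C$ ($C$ independent of $\sigma$), then $\{v_\sigma\}$ is relatively compact in $\mathcal T_0$ as $\sigma\to\infty$ and each limit point lies in $\mathcal T_\infty$. (A2) For each $\sigma\in(0,\infty]$, $\mathcal E_\sigma:\mathcal T_\sigma\to[0,\infty)$ is weakly lower semicontinuous on $\mathcal T_\sigma$, and: (i) there is $\varphi\in C^0([0,\infty)^2)$ with $|\mathcal E_\sigma(u)-\mathcal E_\sigma(v)|\le\varphi(\|u\|_{\mathcal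 T_\sigma},\|v\|_{\mathcal T_\sigma})\|u-v\|_{\mathcal T_\sigma}$ for all $u,v\in\mathcal T_\sigma$; (ii) there exist $p\in(1,\infty)$, $\alpha>0$, $\psi\in C^0([0,\infty))$ with $\psi(t)/t^p\to0$ as $t\to\infty$, independent of $\sigma$, with $\alpha\|u\|^p_{\mathcal T_\sigma}\le\mathcal E_\sigma(u)+\psi(\|u\|_{\mathcal T_\sigma})$. (A3) With $\overline{\mathcal E}_\sigma:\mathcal T_0\to[0,\infty]$ equal to $\mathcal E_\sigma$ on $\mathcal T_\sigma$ and $+\infty$ on $\mathcal T_0\setminus\mathcal T_\sigma$ ($\sigma\in(0,\infty]$), $\overline{\mathcal E}_\sigma$ $\Gamma$-converges to $\overline{\mathcal E}_\infty$ as $\sigma\to\infty$ in the strong topology of $\mathcal T_0$. (A4) For $\sigma\in(0,\infty]$, $h\in(0,h_0]$, $W_{\sigma,h}\subset\mathcal T_\sigma$ are finite-dimensional subspaces such that for each $h$ the span of $\bigcup_{\sigma\in(0,\infty]}W_{\sigma,h}$ is finite-dimensional, and: (i) for every $\sigma\in(0,\infty]$ and $u\in\mathcal T_\sigma$ there exist $h_n\to0$ and $u_n\in W_{\sigma,h_n}$ with $\|u-u_n\|_{\mathcal T_\sigma}\to0$; (ii) for each $h\in(0,h_0]$, $W_{\infty,h}=\mathcal T_\infty\cap\bigcup_{\sigma\in(0,\infty]}W_{\sigma,h}$; (iii) with $W_{\infty,0}:=\mathcal T_\infty$: for every $h\in[0,h_0]$, every $v\in W_{\infty,h}$ and every sequence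 $(\sigma_n,h_n)$ with $\sigma_n\to\infty$, $h_n\in(0,h_0]$, and $h_n=h$ for all $n$ if $h>0$, $h_n\to0$ if $h=0$, there exist $v_{\sigma_n}\in\mathcal T_{\sigma_n}$ with $\|v_{\sigma_n}-v\|_{\mathcal T_0}\to0$ and $\mathcal E_{\sigma_n}(v_{\sigma_n})\to\mathcal E_\infty(v)$, and $v_n\in W_{\sigma_n,h_n}$ with $\|v_n-v_{\sigma_n}\|_{\mathcal T_{\sigma_n}}\to0$. Define $\mathcal E_{\sigma,h}:\mathcal T_0\to[0,\infty]$ by $\mathcal E_{\sigma,h}=\mathcal E_\sigma$ on $W_{\sigma,h}$ and $+\infty$ on $\mathcal T_0\setminus W_{\sigma,h}$. $\Gamma$-convergence of $I_s$ to $I$ (with respect to a notion of sequential convergence) means: (1) $I(v)\le\liminf I_s(v_s)$ whenever $v_s\to v$; (2) for each $v$ there is $v_s\to v$ with $\limsup I_s(v_s)\le I(v)$. *)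

From HB Require Import structures.
From mathcomp Require Import all_boot all_order all_algebra.
From mathcomp Require Import all_classical all_reals all_analysis.
Set Implicit Arguments. Unset Strict Implicit. Unset Printing Implicit Defensive.
Import Order.TTheory GRing.Theory Num.Theory.
Import numFieldNormedType.Exports.
Local Open Scope classical_set_scope.
Local Open Scope ring_scope.

(* A "space" T_sigma is modelled as a subset S of the ambient space V = T_0
   together with its own norm N : V -> R (only values on S matter). *)

Definition lin_on (R : realType) (V : normedModType R) (S : set V) (f : V -> R) :=
  forall (a b : R) (x y : V), S x -> S y -> f (a *: x + b *: y) = a * f x + b * f y.

Definition dual_elt (R : realType) (V : normedModType R) (S : set V) (N : V -> R)
  (f : V -> R) :=
  lin_on S f /\ exists C : R, forall x, S x -> `|f x| <= C * N x.

Definition dual_norm (R : realType) (V : normedModType R) (S : set V) (N : V -> R)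
  (f : V -> R) : R :=
  sup [set r : R | exists x, [/\ S x, N x <= 1 & r = `|f x|]].

Definition banach (R : realType) (V : normedModType R) (S : set V) (N : V -> R) :=
  [/\ S 0 /\ (forall (a b : R) x y, S x -> S y -> S (a *: x + b *: y)),
      (forall x, S x -> 0 <= N x /\ (N x = 0 <-> x = 0)),
      (forall (a : R) x, S x -> N (a *: x) = `|a| * N x),
      (forall x y, S x -> S y -> N (x + y) <= N x + N y) &
      (forall u : nat -> V, (forall n, S (u n)) ->
         (forall e : R, 0 < e -> exists M : nat, forall m n : nat,
              (M <= m)%N -> (M <= n)%N -> N (u m - u n) < e) ->
         exists x, S x /\ (fun n => N (u n - x)) @ \oo --> (0 : R))].

(* (S, N) is a reflexive Banach space: the canonical map into the bidual
   is surjective. *)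
Definition refl_banach (R : realType) (V : normedModType R) (S : set V) (N : V -> R) :=
  banach S N /\
  forall Phi : (V -> R) -> R,
    (forall (a b : R) f g, dual_elt S N f -> dual_elt S N g ->
        Phi (fun x => a * f x + b * g x) = a * Phi f + b * Phi g) ->
    (exists C : R, forall f, dual_elt S N f -> `|Phi f| <= C * dual_norm S N f) ->
    exists x, S x /\ forall f, dual_elt S N f -> Phi f = f x.

Definition weak_cvg (R : realType) (V : normedModType R) (S : set V) (N : V -> R)
  (u : nat -> V) (x : V) :=
  [/\ forall n, S (u n), S x &
      forall f, dual_elt S N f -> (fun n => f (u n)) @ \oo --> f x].

Definition gamma_cvg (R : realType) (V : Type) (conv : (nat -> V) -> V -> Prop)
  (I : nat -> V -> \bar R) (I0 : V -> \bar R) :=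
  (forall v_ v, conv v_ v -> (I0 v <= limn_einf (fun n => I n (v_ n)))%E) /\
  (forall v, exists v_, conv v_ v /\ (limn_esup (fun n => I n (v_ n)) <= I0 v)%E).

Definition ext_inf (R : realType) (V : Type) (A : set V) (F : V -> R) (u : V) : \bar R :=
  if pselect (A u) is left _ then (F u)%:E else +oo%E.

Definition strictly_incr (phi : nat -> nat) :=
  forall m n : nat, (m < n)%N -> (phi m < phi n)%N.

Definition span_seq (R : realType) (V : normedModType R) (s : seq V) : set V :=
  [set x | exists c : nat -> R, x = \sum_(i < size s) c i *: s`_i].

Definition findim_subspace (R : realType) (V : normedModType R) (W : set V) :=
  exists s : seq V, W = span_seq s.

From HB Require Import structures.
From mathcomp Require Import all_boot all_order all_algebra.
From mathcomp Require Import all_classical all_reals all_analysis.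
From mathcomp Require Import lra.
Import Order.TTheory GRing.Theory Num.Theory.
Import numFieldNormedType.Exports.
Local Open Scope classical_set_scope.
Local Open Scope ring_scope.

(* For fixed sigma the discretisation is conforming (W_{sigma,h} is contained
   in T_sigma) and E_sigma is weakly lower semicontinuous, which gives the
   liminf inequality.  For recovery, (A4)(i) approximates u in the norm of
   T_sigma by elements of W_{sigma,h_n}: norm convergence implies weak
   convergence, and the local Lipschitz bound (A2)(i) makes E_sigma continuous
   along norm-convergent sequences. *)

Lemma cvgr_dominated {R : realType} {x e : nat -> R} {l : R} :
  e @ \oo --> (0 : R) -> (forall n, `|x n - l| <= e n) -> x @ \oo --> l.
Proof.
move=> /cvgrPdist_le e0 xe; apply/cvgrPdist_le => eps eps0.
apply: filterS (e0 eps eps0) => n /= en.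
rewrite distrC (le_trans (xe n))//; apply: le_trans en.
by rewrite sub0r normrN ler_norm.
Qed.

Lemma within_continuous_cvg {T U : topologicalType} {A : set T} {f : T -> U}
    {x_ : nat -> T} {x : T} :
  {within A, continuous f} -> A x -> (forall n, A (x_ n)) ->
  x_ @ \oo --> x -> (f \o x_) @ \oo --> f x.
Proof.
move=> /subspace_continuousP fc Ax Ax_ x_x; apply: cvg_comp (fc x Ax).
move=> P /= AP.
have : \forall n \near \oo, A (x_ n) -> P (x_ n) := x_x _ AP.
by apply: filterS => n /(_ (Ax_ n)).
Qed.

Lemma le_limn_einf {R : realType} {u v : nat -> \bar R} :
  (forall n, (u n <= v n)%E) -> (limn_einf u <= limn_einf v)%E.
Proof.
move=> uv; rewrite !limn_einf_lim.
apply: lee_lim; [exact: is_cvg_einfs|exact: is_cvg_einfs|].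
apply: nearW => n; apply: le_ereal_inf_tmp => _ [m /= mn <-].
by apply: le_trans (uv m); apply: ereal_inf_lbound; exists m.
Qed.

Section ExtInf.
Context {R : realType} {V : Type}.
Implicit Types (A : set V) (F : V -> R).

Lemma ext_infE A F u : A u -> ext_inf A F u = (F u)%:E.
Proof. by rewrite /ext_inf; case: pselect. Qed.

Lemma ext_inf_ge A F u : ((F u)%:E <= ext_inf A F u)%E.
Proof. by rewrite /ext_inf; case: pselect => // _; exact: leey. Qed.

Lemma ext_inf_liminf {A} {An : nat -> set V} {F} {u_ : nat -> V} {u} :
  A u -> ((F u)%:E <= limn_einf (fun n => (F (u_ n))%:E))%E ->
  (ext_inf A F u <= limn_einf (fun n => ext_inf (An n) F (u_ n)))%E.
Proof.
move=> Au Flsc; rewrite ext_infE//; apply: le_trans Flsc _.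
by apply: le_limn_einf => n; exact: ext_inf_ge.
Qed.

Lemma ext_inf_limsup {A} {An : nat -> set V} {F} {u_ : nat -> V} {u} :
  A u -> (forall n, An n (u_ n)) -> (F \o u_) @ \oo --> F u ->
  limn_esup (fun n => ext_inf (An n) F (u_ n)) = ext_inf A F u.
Proof.
move=> Au Anu Fu; rewrite ext_infE//.
under eq_fun do rewrite ext_infE//.
suff /cvg_limn_einf_sup[] : (fun n => (F (u_ n))%:E) @ \oo --> (F u)%:E by [].
by apply: cvg_EFin; [exact: nearW|exact: Fu].
Qed.

End ExtInf.

Section NormedSubspace.
Context {R : realType} {V : normedModType R} {S : set V} {N : V -> R}.
Hypotheses (S_lin : forall (a b : R) {x y}, S x -> S y -> S (a *: x + b *: y))
  (N_ge0 : forall {x}, S x -> 0 <= N x)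
  (N_hom : forall (a : R) {x}, S x -> N (a *: x) = `|a| * N x)
  (N_tri : forall {x y}, S x -> S y -> N (x + y) <= N x + N y).

Lemma subS {x y} : S x -> S y -> S (x - y).
Proof. by move=> Sx Sy; have := S_lin 1 (-1) Sx Sy; rewrite scale1r scaleN1r. Qed.

Lemma N_distC {x y} : S x -> S y -> N (x - y) = N (y - x).
Proof.
move=> Sx Sy; rewrite -opprB -scaleN1r N_hom; last exact: subS.
by rewrite normrN normr1 mul1r.
Qed.

Lemma N_dist_ge {x y} : S x -> S y -> `|N x - N y| <= N (x - y).
Proof.
move=> Sx Sy; have := N_tri (subS Sx Sy) Sy; have := N_tri (subS Sy Sx) Sx.
rewrite !subrK (N_distC Sy Sx) => Nyx Nxy.
by rewrite ler_norml; apply/andP; split; lra.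
Qed.

Context {u_ : nat -> V} {u : V}.
Hypotheses (Su_ : forall n, S (u_ n)) (Su : S u)
  (Nu_u : (fun n => N (u - u_ n)) @ \oo --> (0 : R)).

Lemma N_cvg : (fun n => N (u_ n)) @ \oo --> N u.
Proof.
apply: (cvgr_dominated Nu_u) => n.
by rewrite (N_distC Su (Su_ n)); exact: N_dist_ge.
Qed.

Lemma N_cvg_weak_cvg : weak_cvg S N u_ u.
Proof.
split=> // f [flin [C fC]].
apply: (cvgr_dominated (e := fun n => C * N (u - u_ n))).
  by rewrite -(mulr0 C); exact: cvgMl_tmp.
move=> n; rewrite distrC.
have := flin 1 (-1) u (u_ n) Su (Su_ n).
rewrite scale1r scaleN1r mul1r mulN1r => <-; exact/fC/subS.
Qed.

Lemma loc_lipschitz_cvg {E : V -> R} {phi : R -> R -> R} :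
  {within [set p : R * R | 0 <= p.1 /\ 0 <= p.2],
     continuous (fun p : R * R => phi p.1 p.2)} ->
  (forall x y, S x -> S y -> `|E x - E y| <= phi (N x) (N y) * N (x - y)) ->
  (E \o u_) @ \oo --> E u.
Proof.
move=> phic Elip.
have phi_cvg : (fun n => phi (N u) (N (u_ n))) @ \oo --> phi (N u) (N u).
  apply: (within_continuous_cvg (x_ := fun n => (N u, N (u_ n)))
    (x := (N u, N u)) phic) => //=.
  - by split; exact: N_ge0.
  - by move=> n; split; exact: N_ge0.
  - exact: cvg_pair (cvg_cst _) N_cvg.
apply: (cvgr_dominated (e := fun n => `|phi (N u) (N (u_ n))| * N (u - u_ n))).
  by rewrite -(mulr0 `|phi (N u) (N u)|); exact: cvgM (cvg_norm phi_cvg) Nu_u.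
move=> n; rewrite distrC; apply: le_trans (Elip _ _ Su (Su_ n)) _.
by rewrite ler_wpM2r ?ler_norm// N_ge0//; exact: subS.
Qed.

End NormedSubspace.

Theorem corollary2p11 (R : realType) (V : normedModType R)
  (T : \bar R -> set V) (N : \bar R -> V -> R)
  (E : \bar R -> V -> R)
  (h0 : R) (W : \bar R -> R -> set V)
  (* T_0 = V with its norm; T_sigma (sigma in (0,oo]) reflexive Banach in T_0 *)
  (HT0 : refl_banach [set: V] (fun x => `|x|))
  (HT : forall s : \bar R, (0 < s)%E -> refl_banach (T s) (N s))
  (* (A1)(i) *)
  (HA1i : exists M1 : R, 0 < M1 /\
     forall s : \bar R, (0 < s)%E -> forall u, T s u -> M1 * `|u| <= N s u)
  (* (A1)(ii) *)
  (HA1ii : forall (sg : nat -> R) (v : nat -> V),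
     (forall n, 0 < sg n) -> sg @ \oo --> +oo ->
     (forall n, T (sg n)%:E (v n)) ->
     (exists C : R, forall n, N (sg n)%:E (v n) <= C) ->
     (forall phi, strictly_incr phi -> exists psi, strictly_incr psi /\
         exists w : V, (fun n => v (phi (psi n))) @ \oo --> w) /\
     (forall phi (w : V), strictly_incr phi ->
         (fun n => v (phi n)) @ \oo --> w -> T +oo%E w))
  (* (A2): nonnegativity and (sequential) weak lower semicontinuity *)
  (HA2pos : forall s : \bar R, (0 < s)%E -> forall u, T s u -> 0 <= E s u)
  (HA2lsc : forall s : \bar R, (0 < s)%E -> forall u_ u,
     weak_cvg (T s) (N s) u_ u ->
     ((E s u)%:E <= limn_einf (fun n => (E s (u_ n))%:E))%E)
  (* (A2)(i) *)
  (HA2i : forall s : \bar R, (0 < s)%E -> exists phi : R -> R -> R,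
     {within [set p : R * R | 0 <= p.1 /\ 0 <= p.2],
        continuous (fun p : R * R => phi p.1 p.2)} /\
     forall u v, T s u -> T s v ->
       `|E s u - E s v| <= phi (N s u) (N s v) * N s (u - v))
  (* (A2)(ii) *)
  (HA2ii : exists (p alpha : R) (psi : R -> R), 1 < p /\ 0 < alpha /\
     {within [set t : R | 0 <= t], continuous psi} /\
     (fun t => psi t / powR t p) @ +oo --> (0 : R) /\
     forall s : \bar R, (0 < s)%E -> forall u, T s u ->
       alpha * powR (N s u) p <= E s u + psi (N s u))
  (* (A3) *)
  (HA3 : forall sg : nat -> R, (forall n, 0 < sg n) -> sg @ \oo --> +oo ->
     gamma_cvg (fun (v_ : nat -> V) (v : V) => v_ @ \oo --> v)
       (fun n => ext_inf (T (sg n)%:E) (E (sg n)%:E))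
       (ext_inf (T +oo%E) (E +oo%E)))
  (* (A4) *)
  (Hh0 : 0 < h0)
  (HA4W : forall (s : \bar R) (h : R), (0 < s)%E -> 0 < h <= h0 ->
     W s h `<=` T s /\ findim_subspace (W s h))
  (HA4span : forall h : R, 0 < h <= h0 ->
     exists sp : seq V,
       \bigcup_(s in [set s : \bar R | (0 < s)%E]) W s h `<=` span_seq sp)
  (HA4i : forall s : \bar R, (0 < s)%E -> forall u, T s u ->
     exists (hs : nat -> R) (us : nat -> V),
       [/\ forall n, 0 < hs n <= h0, hs @ \oo --> (0 : R),
           forall n, W s (hs n) (us n) &
           (fun n => N s (u - us n)) @ \oo --> (0 : R)])
  (HA4ii : forall h : R, 0 < h <= h0 ->
     W +oo%E h = T +oo%E `&` \bigcup_(s in [set s : \bar R | (0 < s)%E]) W s h)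
  (HA4iii : forall h : R, 0 <= h <= h0 ->
     forall v, (if h == 0 then T +oo%E v else W +oo%E h v) ->
     forall (sg : nat -> R) (hs : nat -> R),
       (forall n, 0 < sg n) -> sg @ \oo --> +oo ->
       (forall n, 0 < hs n <= h0) ->
       (if h == 0 then hs @ \oo --> (0 : R) else forall n, hs n = h) ->
       exists vs : nat -> V,
         [/\ forall n, T (sg n)%:E (vs n),
             (fun n => `|vs n - v|) @ \oo --> (0 : R),
             (fun n => E (sg n)%:E (vs n)) @ \oo --> E +oo%E v &
             exists vn : nat -> V, (forall n, W (sg n)%:E (hs n) (vn n)) /\
               (fun n => N (sg n)%:E (vn n - vs n)) @ \oo --> (0 : R)])
  (* the fixed sigma *)
  (s : \bar R) (hs : (0 < s)%E) :
  (* liminf inequality along every h_n -> 0, for weakly convergent sequences in T_s *)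
  (forall (hn : nat -> R) (u_ : nat -> V) (u : V),
     (forall n, 0 < hn n <= h0) -> hn @ \oo --> (0 : R) ->
     weak_cvg (T s) (N s) u_ u ->
     (ext_inf (T s) (E s) u <=
        limn_einf (fun n => ext_inf (W s (hn n)) (E s) (u_ n)))%E) /\
  (* recovery sequences, converging weakly in T_s *)
  (forall u : V, T s u ->
     exists (hn : nat -> R) (u_ : nat -> V),
       [/\ forall n, 0 < hn n <= h0, hn @ \oo --> (0 : R),
           weak_cvg (T s) (N s) u_ u &
           (limn_esup (fun n => ext_inf (W s (hn n)) (E s) (u_ n))
              <= ext_inf (T s) (E s) u)%E]).
Proof.
have [[_ Slin] Npos Nhom Ntri _] := (HT s hs).1.
have Nge0 x : T s x -> 0 <= N s x by move=> /Npos[].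
split=> [hn u_ u _ _ wc|u Tu].
  by have [_ Tu _] := wc; exact: (ext_inf_liminf Tu (HA2lsc s hs _ _ wc)).
have [hn [u_ [hn_pos hn0 Wu_ Nu_u]]] := HA4i s hs u Tu.
have Tu_ n : T s (u_ n) by exact: (HA4W s (hn n) hs (hn_pos n)).1 _ (Wu_ n).
have [phi [phic Elip]] := HA2i s hs.
have Ecvg : (E s \o u_) @ \oo --> E s u.
  exact: (loc_lipschitz_cvg Slin Nge0 Nhom Ntri Tu_ Tu Nu_u phic Elip).
exists hn, u_; split=> //; first exact: (N_cvg_weak_cvg Slin Tu_ Tu Nu_u).
by rewrite (ext_inf_limsup Tu Wu_ Ecvg).
Qed.
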